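(* Let $1\le r\le n$ and let $\mathcal{A}$ be a family of $r$-element subsets of $[n]$. Define $m:\mathcal{A}\to\mathbb{R}$ by: $m(A)=n/r$ if $A$ is contained in some matching of $\lfloor n/r\rfloor$ sets from $\mathcal{A}$, and otherwise $m(A)$ is the size of the largest matching of sets from $\mathcal{A}$ that contains $A$. Then \[ \sum_{A\in\mathcal{A}} \frac{1}{m(A)} \le \binom{n-1}{r-1}. \]
   Context: A matching is a collection of pairwise disjoint sets. $[n]=\{1,\dots,n\}$. *)

From mathcomp Require Import all_boot all_order all_algebra.
Set Implicit Arguments. Unset Strict Implicit. Unset Printing Implicit Defensive.
Import Order.TTheory GRing.Theory Num.Theory.

Definition is_matching (T : finType) (M : {set {set T}}) : bool :=
  [forall B in M, forall C in M, (B != C) ==> [disjoint B & C]].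

Definition max_matching_containing (T : finType) (F : {set {set T}}) (A : {set T}) : nat :=
  \max_(M in powerset F | is_matching M && (A \in M)) #|M|.

Definition mweight (R : realFieldType) (n r : nat) (F : {set {set 'I_n}}) (A : {set 'I_n}) : R :=
  if [exists M in powerset F, [&& is_matching M, A \in M & #|M| == n %/ r]]
  then (n%:R / r%:R)%R
  else ((max_matching_containing F A)%:R)%R.

Arguments mweight R n r F A : clear implicits.

From mathcomp Require Import all_boot all_order all_algebra.
From mathcomp Require Import zify fingroup perm.
Import Order.TTheory GRing.Theory Num.Theory.
Set Implicit Arguments. Unset Strict Implicit. Unset Printing Implicit Defensive.

(* Katona's cycle method.  Put the points of [n] on a cycle in the order given
   by a permutation and look at the n arcs of r consecutive points.  If S is
   the set of arcs that belong to the family, then the weights 1/m(A) of the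
   arcs in S add up to at most r: when |S| <= r * (n div r), S splits into r
   families of pairwise disjoint arcs, and a family of k disjoint arcs carries
   total weight at most k * (1/k); otherwise every arc of S lies in a matching
   of n div r arcs of S, so that its weight is r/n.  Averaging over all
   permutations, each r-set is an arc equally often, which turns the bound r
   per cycle into the binomial coefficient C(n-1, r-1). *)

(** * Splitting positions on a cycle into separated classes *)

Definition natmem n (T : {set 'I_n}) (z : nat) : bool := z \in [seq val x | x in T].

Definition gaps n (T : {set 'I_n}) (x : nat) : nat := \sum_(0 <= z < x) ~~ natmem T z.

Definition compress n (d : nat) (T : {set 'I_n}) (x : nat) : nat := x - minn (gaps T x) d.

Lemma natmem_ord n (T : {set 'I_n}) (x : 'I_n) : natmem T x = (x \in T).
Proof. by rewrite /natmem (mem_map val_inj) mem_enum. Qed.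

Lemma sum_bool_le (b : nat -> bool) x y : \sum_(x <= z < y) (b z : nat) <= y - x.
Proof.
rewrite -[y - x]muln1 -sum_nat_const_nat; apply: leq_sum => z _; by case: (b z).
Qed.

Lemma gaps_split n (T : {set 'I_n}) x y : x <= y ->
  gaps T y = gaps T x + \sum_(x <= z < y) ~~ natmem T z.
Proof. by move=> xy; rewrite /gaps (big_cat_nat (leq0n x) xy). Qed.

Lemma leq_gaps n (T : {set 'I_n}) x y : x <= y -> gaps T x <= gaps T y.
Proof. by move=> xy; rewrite (gaps_split T xy) leq_addr. Qed.

Lemma gaps_lt_dist n (T : {set 'I_n}) (x : 'I_n) y : x \in T -> x < y ->
  gaps T y < gaps T x + (y - x).
Proof.
move=> xT xy; rewrite (gaps_split T (ltnW xy)) big_ltn // natmem_ord xT /= add0n.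
have := sum_bool_le (fun z => ~~ natmem T z) x.+1 y; lia.
Qed.

Lemma natmem_add_gaps n (T : {set 'I_n}) x :
  \sum_(0 <= z < x) (natmem T z : nat) + gaps T x = x.
Proof.
rewrite /gaps -big_split /= -[x in _ = x]subn0 -[x - 0]muln1 -sum_nat_const_nat.
by apply: eq_bigr => z _; case: (natmem T z).
Qed.

Lemma gaps_le n (T : {set 'I_n}) x : gaps T x <= x.
Proof. have := natmem_add_gaps T x; lia. Qed.

Lemma card_natmem n (T : {set 'I_n}) : #|T| = \sum_(0 <= z < n) (natmem T z : nat).
Proof.
rewrite big_mkord -sum1_card big_mkcond /=; apply: eq_bigr => z _.
by rewrite natmem_ord; case: (z \in T).
Qed.

Lemma sub_gaps_lt_card n (T : {set 'I_n}) (x : 'I_n) : x \in T -> x - gaps T x < #|T|.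
Proof.
move=> xT; rewrite card_natmem (big_cat_nat (leq0n x) (ltnW (ltn_ord x))) /=.
rewrite (big_ltn (ltn_ord x)) natmem_ord xT.
have := natmem_add_gaps T x; lia.
Qed.

(* Starting points of pairwise disjoint arcs of length r on a cycle of length n. *)
Definition separated n r (C : {set 'I_n}) : Prop := forall x y : 'I_n,
  x \in C -> y \in C -> x < y -> r <= y - x /\ r <= x + n - y.

Lemma compress_congr_far (x y gx gy d K r n a b : nat) : 0 < r ->
  n = K * r + d -> y < n -> x < y -> gx <= gy -> gy < gx + (y - x) ->
  gy <= y -> gx <= x -> (y - gy < K * r \/ d <= gy) ->
  a = x - minn gx d -> b = y - minn gy d -> a %% r = b %% r ->
  r <= y - x /\ r <= x + n - y.
Proof.
move=> r0 hn hy xy gxy gyx gyy gxx hb ea eb hab.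
have a_lt_b : a < b by lia.
have ba_le : b - a <= y - x by lia.
have b_lt : b < K * r by lia.
have ea' := divn_eq a r; have eb' := divn_eq b r; rewrite hab in ea'.
move: (a %/ r) (b %/ r) (b %% r) ea' eb' => qa qb m ea' eb'.
have qab : qa < qb by rewrite -(ltn_pmul2r r0); lia.
have qbK : qb < K by rewrite -(ltn_pmul2r r0); lia.
have e1 : b - a = (qb - qa) * r by rewrite mulnBl; lia.
have f1 : r <= (qb - qa) * r by rewrite leq_pmull // subn_gt0.
have f2 : (qb - qa) * r <= (K - 1) * r by rewrite leq_mul2r; apply/orP; right; lia.
have f3 : (K - 1) * r = K * r - r by rewrite mulnBl mul1n.
clear -ba_le b_lt e1 f1 f2 f3 hn hy xy ea eb gxx gyy.
split; lia.
Qed.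

Definition compress_class n r (T : {set 'I_n}) (c : nat) : {set 'I_n} :=
  [set x in T | compress (n %% r) T x %% r == c].

Lemma compress_class_sub n r (T : {set 'I_n}) c : compress_class r T c \subset T.
Proof. by apply/subsetP => x; rewrite inE => /andP[]. Qed.

(* Deleting the first n mod r non-members of T moves every member below
   r * (n div r); members whose new positions agree modulo r are then r apart,
   also around the cycle since the deleted slots are recovered there. *)
Lemma separated_compress_class n r (T : {set 'I_n}) c : 0 < r ->
  #|T| <= n %/ r * r -> separated r (compress_class r T c).
Proof.
move=> r0 hT x y; rewrite !inE => /andP[xT /eqP hx] /andP[yT /eqP hy] xy.
have := sub_gaps_lt_card yT => y_gaps.
apply: (compress_congr_far (gx := gaps T x) (gy := gaps T y) (d := n %% r)
  (K := n %/ r) (a := compress (n %% r) T x) (b := compress (n %% r) T y)) => //.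
- exact: divn_eq.
- exact: leq_gaps (ltnW xy).
- exact: gaps_lt_dist.
- exact: gaps_le.
- exact: gaps_le.
- lia.
- by rewrite hx hy.
Qed.

Lemma big_compress_class (V : Type) (idx : V) (op : Monoid.com_law idx)
    n r (T : {set 'I_n}) (f : 'I_n -> V) : 0 < r ->
  \big[op/idx]_(x in T) f x
    = \big[op/idx]_(j < r) \big[op/idx]_(x in compress_class r T j) f x.
Proof.
move=> r0; pose cls (x : 'I_n) := Ordinal (ltn_pmod (compress (n %% r) T x) r0).
rewrite (partition_big cls xpredT) //=.
by apply: eq_bigr => j _; apply: eq_bigl => x; rewrite inE -val_eqE.
Qed.

(** * Weights on separated families *)

Lemma sum_eq_mul_bound r (a : 'I_r -> nat) K : (forall j, a j <= K) ->
  \sum_(j < r) a j = r * K -> forall j, a j = K.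
Proof.
move=> aK sum_a j.
have : \sum_(k < r) (K - a k) == 0.
  by rewrite sumnB // sum_a sum_nat_const card_ord mulnC subnn.
rewrite sum_nat_eq0 => /forallP/(_ j); rewrite implyTb subn_eq0 => Ka.
by apply/eqP; rewrite eqn_leq aK.
Qed.

Lemma exists_subset_card (T : finType) (S : {set T}) i k : i \in S -> 0 < k ->
  k <= #|S| -> exists U : {set T}, [/\ i \in U, U \subset S & #|U| = k].
Proof.
move=> iS k0; elim: {S}#|S| {-2}S iS (erefl #|S|) => [|m IH] S iS cardS km; first lia.
have [km'|mk] := leqP k m; last by exists S; split => //; lia.
have : 0 < #|S :\ i| by rewrite (cardsD1 i S) iS in cardS; lia.
case/card_gt0P => j; rewrite !inE => /andP[ji jS].
have cardSj : m = #|S :\ j| by rewrite (cardsD1 j S) jS in cardS; lia.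
have [||U [iU US cU]] := IH (S :\ j) _ cardSj; first by rewrite !inE iS eq_sym ji.
  by rewrite -cardSj.
by exists U; split => //; apply: subset_trans US (subsetDl _ _).
Qed.

Section SeparatedWeights.
Variables (R : realFieldType) (n r : nat) (S : {set 'I_n}) (w : 'I_n -> R).
Hypotheses (r_gt0 : 0 < r) (r_le_n : r <= n).
Hypothesis card_separated : forall C : {set 'I_n},
  C \subset S -> separated r C -> #|C| * r <= n.
Hypothesis w_le_inv_card : forall (C : {set 'I_n}) i,
  C \subset S -> separated r C -> i \in C -> (w i <= (#|C|%:R)^-1)%R.
Hypothesis w_le_full : forall (C : {set 'I_n}) i,
  C \subset S -> separated r C -> i \in C -> #|C| = n %/ r -> (w i <= r%:R / n%:R)%R.

Local Open Scope ring_scope.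

Lemma sum_separated_le1 (C : {set 'I_n}) : C \subset S -> separated r C ->
  \sum_(i in C) w i <= 1.
Proof.
move=> CS sepC; apply: le_trans (_ : \sum_(i in C) (#|C|%:R)^-1 <= 1).
  by apply: ler_sum => i iC; apply: w_le_inv_card.
rewrite sumr_const; have [->|C_gt0] := posnP #|C|; first by rewrite mulr0n.
by rewrite -[X in X <= 1]mulr_natr mulVf // pnatr_eq0 -lt0n.
Qed.

Lemma sum_weights_le_small : (#|S| <= n %/ r * r)%N -> \sum_(i in S) w i <= r%:R.
Proof.
move=> small; rewrite (big_compress_class _ _ _ r_gt0).
rewrite -[r in r%:R]card_ord -sumr_const; apply: ler_sum => j _.
apply: sum_separated_le1; first exact: subset_trans (compress_class_sub r S j) _.
exact: separated_compress_class.
Qed.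

(* In a subset of S of size r * (n div r) containing i, the r compress classes
   are separated, so each has at most, hence exactly, n div r elements. *)
Lemma weight_le_large i : (n %/ r * r < #|S|)%N -> i \in S -> w i <= r%:R / n%:R.
Proof.
move=> large iS; have K_gt0 : (0 < n %/ r)%N by rewrite divn_gt0.
have KS_gt0 : (0 < n %/ r * r)%N by rewrite muln_gt0 K_gt0.
have [U [iU US cardU]] := exists_subset_card iS KS_gt0 (ltnW large).
have sepU j : separated r (compress_class r U j).
  by apply: separated_compress_class; rewrite ?cardU.
have subU j : compress_class r U j \subset S.
  exact: subset_trans (compress_class_sub r U j) US.
pose j0 := Ordinal (ltn_pmod (compress (n %% r) U i) r_gt0).
apply: (w_le_full (subU j0) (sepU j0)); first by rewrite inE iU eqxx.
apply: (@sum_eq_mul_bound r (fun j => #|compress_class r U j|)) => [j|].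
  by rewrite leq_divRL //; apply: card_separated.
rewrite mulnC -cardU -sum1_card (big_compress_class _ _ _ r_gt0).
by apply: eq_bigr => j _; rewrite sum1_card.
Qed.

Lemma sum_weights_le : \sum_(i in S) w i <= r%:R.
Proof.
have [small|large] := leqP #|S| (n %/ r * r); first exact: sum_weights_le_small.
apply: le_trans (_ : \sum_(i in S) r%:R / n%:R <= r%:R).
  by apply: ler_sum => i; apply: weight_le_large.
have card_S : (#|S| <= n)%N by rewrite -[n in (_ <= n)%N]card_ord max_card.
rewrite sumr_const -[X in X <= _]mulr_natr mulrAC ler_pdivrMr ?ltr0n; last lia.
by rewrite -!natrM ler_nat leq_mul2l card_S orbT.
Qed.

End SeparatedWeights.

(** * Arcs of a cycle *)

Definition rotf n (n_gt0 : 0 < n) (i x : 'I_n) : 'I_n := Ordinal (ltn_pmod (x + i) n_gt0).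

Lemma rotf_inj n (n_gt0 : 0 < n) i : injective (rotf n_gt0 i).
Proof.
move=> x y /(congr1 val) /= /eqP; rewrite eqn_modDr !modn_small // => /eqP.
exact: val_inj.
Qed.

Definition rot n (n_gt0 : 0 < n) i : {perm 'I_n} := perm (@rotf_inj n n_gt0 i).

Definition arc0 n r : {set 'I_n} := [set x : 'I_n | x < r].

Definition arc n (n_gt0 : 0 < n) r i : {set 'I_n} := rot n_gt0 i @: arc0 n r.

Lemma card_arc0 n r : r <= n -> #|arc0 n r| = r.
Proof.
move=> rn; have -> : arc0 n r = [set widen_ord rn x | x : 'I_r].
  apply/setP => y; rewrite inE; apply/idP/imsetP => [yr|[x _ ->]] //=.
  by exists (Ordinal yr) => //; apply: val_inj.
by rewrite card_imset ?card_ord // => a b /(congr1 val) /= /val_inj.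
Qed.

Lemma card_arc n (n_gt0 : 0 < n) r i : r <= n -> #|arc n_gt0 r i| = r.
Proof. by move=> rn; rewrite card_imset ?card_arc0 //; exact: perm_inj. Qed.

Lemma modn_lt_double a n : a < n + n -> a %% n = if a < n then a else a - n.
Proof.
case: ifP => [a_lt_n _|a_ge_n a_lt]; first by rewrite modn_small.
have {1}-> : a = a - n + n by lia.
by rewrite modnDr modn_small; lia.
Qed.

Lemma arc_disjoint n (n_gt0 : 0 < n) r (i j : 'I_n) : i < j ->
  r <= j - i -> r <= i + n - j -> [disjoint arc n_gt0 r i & arc n_gt0 r j].
Proof.
move=> ij r_le1 r_le2; apply/pred0P => y /=.
apply/negP => /andP[/imsetP[x + ->] /imsetP[x' +]]; rewrite !inE => xr x'r.
have := ltn_ord i; have := ltn_ord j; have := ltn_ord x; have := ltn_ord x'.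
move=> x'_n x_n j_n i_n /(congr1 val); rewrite !permE /= !modn_lt_double; try lia.
by case: ifP; case: ifP; lia.
Qed.

Lemma separated_arcs_disjoint n (n_gt0 : 0 < n) r (C : {set 'I_n}) i j :
  separated r C -> i \in C -> j \in C -> i != j ->
  [disjoint arc n_gt0 r i & arc n_gt0 r j].
Proof.
move=> sepC iC jC; case: (ltngtP i j) => [ij|ji|/val_inj ->]; last by rewrite eqxx.
- by have [] := sepC _ _ iC jC ij; move=> *; exact: arc_disjoint.
- by have [] := sepC _ _ jC iC ji; move=> *; rewrite disjoint_sym; exact: arc_disjoint.
Qed.

(** * Matchings and the weight m *)

Lemma matching_card n r (M : {set {set 'I_n}}) : is_matching M ->
  (forall B, B \in M -> #|B| = r) -> #|M| * r <= n.
Proof.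
move=> /forallP matchM cardM.
have /eqP triv : trivIset M.
  apply/trivIsetP => A B AM BM AB.
  by have /implyP/(_ AM)/forallP/(_ B)/implyP/(_ BM)/implyP := matchM A; apply.
rewrite -sum_nat_const (eq_bigr _ (fun B BM => esym (cardM B BM))) triv.
by rewrite -[n in _ <= n]card_ord max_card.
Qed.

Lemma mweight_ge_card (R : realFieldType) n r (F M : {set {set 'I_n}}) A :
  0 < r -> M \subset F -> is_matching M -> A \in M ->
  (forall B, B \in M -> #|B| = r) -> (#|M|%:R <= mweight R n r F A)%R.
Proof.
move=> r_gt0 MF matchM AM cardM; rewrite /mweight; case: ifP => _.
  by rewrite ler_pdivlMr ?ltr0n // -natrM ler_nat; apply: matching_card.
rewrite ler_nat; apply: (@leq_bigmax_cond _ _ _ M).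
by rewrite powersetE MF matchM AM.
Qed.

Lemma mweight_full (R : realFieldType) n r (F M : {set {set 'I_n}}) A :
  M \subset F -> is_matching M -> A \in M -> #|M| = n %/ r ->
  mweight R n r F A = (n%:R / r%:R)%R.
Proof.
move=> MF matchM AM cardM; rewrite /mweight ifT //.
by apply/existsP; exists M; rewrite powersetE MF matchM AM cardM eqxx.
Qed.

Definition inv_mweight (R : realFieldType) n r (F : {set {set 'I_n}})
    (B : {set 'I_n}) : R :=
  if B \in F then ((mweight R n r F B)^-1)%R else 0%R.

Section OneCycle.
Variables (R : realFieldType) (n r : nat) (F : {set {set 'I_n}}).
Hypotheses (n_gt0 : 0 < n) (r_gt0 : 0 < r) (r_le_n : r <= n).
Variable p : {perm 'I_n}.

Let parc j := p @: arc n_gt0 r j.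

Lemma card_parc j : #|parc j| = r.
Proof. by rewrite card_imset ?card_arc //; exact: perm_inj. Qed.

Lemma separated_parc_disjoint (C : {set 'I_n}) j j' : separated r C ->
  j \in C -> j' \in C -> j != j' -> [disjoint parc j & parc j'].
Proof. by rewrite /parc imset_disjoint; [exact: separated_arcs_disjoint|exact: perm_inj]. Qed.

Lemma parc_inj (C : {set 'I_n}) : separated r C -> {in C &, injective parc}.
Proof.
move=> sepC j j' jC j'C e; apply/eqP; apply: contraTT isT => neq.
have := separated_parc_disjoint sepC jC j'C neq; rewrite e.
have : 0 < #|parc j'| by rewrite card_parc.
by case/card_gt0P => x xA /disjointFr/(_ xA); rewrite xA.
Qed.

Lemma matching_parcs (C : {set 'I_n}) : separated r C -> is_matching (parc @: C).
Proof.
move=> sepC; apply/forallP => X; apply/implyP => /imsetP[j jC ->].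
apply/forallP => Y; apply/implyP => /imsetP[j' j'C ->]; apply/implyP => neq.
by apply: separated_parc_disjoint sepC jC j'C _; apply: contraNneq neq => ->.
Qed.

Lemma card_parcs (C : {set 'I_n}) : separated r C -> #|parc @: C| = #|C|.
Proof. by move=> sepC; rewrite card_in_imset //; exact: parc_inj. Qed.

Lemma card_mem_parcs (C : {set 'I_n}) X : X \in parc @: C -> #|X| = r.
Proof. by case/imsetP => j _ ->; exact: card_parc. Qed.

Lemma parcs_sub (C : {set 'I_n}) :
  C \subset [set i | parc i \in F] -> parc @: C \subset F.
Proof. by move=> /subsetP CF; apply/subsetP => X /imsetP[j /CF]; rewrite inE => ? ->. Qed.

Lemma sum_parc_weights_le : (\sum_(i < n) inv_mweight R r F (parc i) <= r%:R)%R.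
Proof.
rewrite (eq_bigr (fun i => if i \in [set i | parc i \in F]
    then (mweight R n r F (parc i))^-1 else 0))%R; last by move=> i _; rewrite inE.
rewrite -big_mkcond; apply: sum_weights_le => //.
- move=> C CS sepC; rewrite -(card_parcs sepC).
  by apply: matching_card; [exact: matching_parcs | exact: card_mem_parcs].
- move=> C i CS sepC iC.
  have := mweight_ge_card R r_gt0 (parcs_sub CS) (matching_parcs sepC) (imset_f parc iC)
    (@card_mem_parcs C).
  rewrite (card_parcs sepC) => le_m.
  have C_gt0 : (0 < #|C|%:R :> R)%R by rewrite ltr0n; apply/card_gt0P; exists i.
  by rewrite lef_pV2 // posrE; apply: lt_le_trans le_m.
- move=> C i CS sepC iC cardC.
  rewrite (mweight_full _ (parcs_sub CS) (matching_parcs sepC) (imset_f parc iC));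
    first by rewrite invf_div.
  by rewrite card_parcs.
Qed.

End OneCycle.

(** * Averaging over all cyclic orders *)

Lemma exists_perm_imset (T : finType) (A B : {set T}) : #|A| = #|B| ->
  exists tau : {perm T}, tau @: A = B.
Proof.
move=> cardAB; pose sA := enum A ++ enum (~: A); pose sB := enum B ++ enum (~: B).
have uniq_sB : uniq sB.
  by rewrite cat_uniq !enum_uniq /= andbT; apply/hasPn => x; rewrite !mem_enum inE => ->.
have size_sAB : size sA = size sB by rewrite !size_cat -!cardE !cardsC.
have sA_all x : x \in sA by rewrite mem_cat !mem_enum inE orbN.
pose f x := nth x sB (index x sA).
have f_inj : injective f.
  move=> x y; rewrite /f; have idx z : index z sA < size sB by rewrite -size_sAB index_mem.
  rewrite (set_nth_default y) // => /eqP; rewrite nth_uniq // => /eqP e.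
  by rewrite -(nth_index x (sA_all x)) e nth_index.
exists (perm f_inj); apply/eqP; rewrite eqEcard card_imset ?cardAB ?leqnn ?andbT;
  last exact: perm_inj.
apply/subsetP => y /imsetP[x xA ->]; rewrite permE /f.
have xA' : x \in enum A by rewrite mem_enum.
have idx_lt : index x (enum A) < size (enum B) by rewrite -cardE -cardAB cardE index_mem.
by rewrite /sA index_cat xA' /sB nth_cat idx_lt -(mem_enum B) mem_nth.
Qed.

Section Averaging.
Variables (n r : nat).
Hypotheses (n_gt0 : 0 < n) (r_le_n : r <= n).

Definition nperm_onto (A : {set 'I_n}) : nat :=
  #|[pred p : {perm 'I_n} | p @: arc0 n r == A]|.

Lemma nperm_onto_card (A : {set 'I_n}) : #|A| = r -> nperm_onto A = nperm_onto (arc0 n r).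
Proof.
move=> cardA; have [tau tauA] := exists_perm_imset (etrans (card_arc0 r_le_n) (esym cardA)).
rewrite /nperm_onto -!sum1_card (reindex_inj (mulIg tau)) /=; apply: eq_bigl => p.
rewrite !inE -tauA.
have -> : [set (p * tau)%g x | x in arc0 n r] = tau @: (p @: arc0 n r).
  by rewrite -imset_comp; apply: eq_imset => x; rewrite permM.
by rewrite (inj_eq (imset_inj (@perm_inj _ tau))).
Qed.

Lemma nperm_onto_arc0_gt0 : 0 < nperm_onto (arc0 n r).
Proof.
apply/card_gt0P; exists 1%g; rewrite inE; apply/eqP/setP => x.
by apply/imsetP/idP => [[y yA ->]|xA]; [rewrite perm1 | exists x; rewrite ?perm1].
Qed.

Lemma sum_perm_arc0 (V : nmodType) (f : {set 'I_n} -> V) :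
  (forall A : {set 'I_n}, #|A| != r -> f A = 0%R) ->
  (\sum_(p : {perm 'I_n}) f (p @: arc0 n r)
    = (\sum_(A : {set 'I_n}) f A) *+ nperm_onto (arc0 n r))%R.
Proof.
move=> f0; rewrite (partition_big (fun p : {perm 'I_n} => p @: arc0 n r) xpredT) //=.
rewrite -sumrMnl; apply: eq_bigr => A _.
rewrite (eq_bigr (fun=> f A)); last by move=> p /eqP ->.
rewrite sumr_const; have [cardA|/f0 ->] := eqVneq #|A| r; last by rewrite !mul0rn.
by rewrite -(nperm_onto_card cardA); congr (_ *+ _)%R; apply: eq_card.
Qed.

Lemma nperm_onto_mul_bin : nperm_onto (arc0 n r) * 'C(n, r) = n`!.
Proof.
have f0 (A : {set 'I_n}) : #|A| != r -> (#|A| == r : nat) = 0 by move/negbTE ->.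
have := sum_perm_arc0 f0; rewrite (eq_bigr (fun=> 1)) => [|p _]; last first.
  by rewrite card_imset ?card_arc0 ?eqxx //; exact: perm_inj.
rewrite sum1_card card_Sn => ->; rewrite -mulr_natr natn natrME mulnC.
by rewrite -[n in 'C(n, _)]card_ord -card_draws cardsE -sum1_card big_mkcond.
Qed.

Lemma arc_rot (p : {perm 'I_n}) i : p @: arc n_gt0 r i = (rot n_gt0 i * p)%g @: arc0 n r.
Proof. by rewrite /arc -imset_comp; apply: eq_imset => x; rewrite permM. Qed.

Lemma sum_perm_arc (V : nmodType) (f : {set 'I_n} -> V) i :
  (\sum_(p : {perm 'I_n}) f (p @: arc n_gt0 r i)
    = \sum_(p : {perm 'I_n}) f (p @: arc0 n r))%R.
Proof.
rewrite [RHS](reindex_inj (mulgI (rot n_gt0 i))).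
by apply: eq_bigr => p _; rewrite arc_rot.
Qed.

End Averaging.

Unset Implicit Arguments. Set Strict Implicit. Set Printing Implicit Defensive.
Local Open Scope ring_scope.

Theorem theorem5 (R : realFieldType) (n r : nat) (hr1 : (1 <= r)%N) (hrn : (r <= n)%N)
  (F : {set {set 'I_n}}) (hF : forall A, A \in F -> #|A| = r) :
  \sum_(A in F) (mweight R n r F A)^-1 <= ('C(n.-1, r.-1))%:R.
Proof.
have n_gt0 : (0 < n)%N by lia.
set lhs := \sum_(A in F) _; set N0 := nperm_onto r (arc0 n r).
pose total := \sum_(p : {perm 'I_n}) \sum_(i < n) inv_mweight R r F (p @: arc n_gt0 r i).
have total_le : total <= r%:R *+ n`!.
  rewrite -card_Sn -sumr_const; apply: ler_sum => p _; exact: sum_parc_weights_le.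
have total_eq : total = lhs *+ N0 *+ n.
  have outside_F (A : {set 'I_n}) : #|A| != r -> inv_mweight R r F A = 0.
    by rewrite /inv_mweight; case: ifP => // /hF ->; rewrite eqxx.
  rewrite /total exchange_big /= (eq_bigr _ (fun i _ => sum_perm_arc r n_gt0 _ i)).
  by rewrite sumr_const card_ord (sum_perm_arc0 hrn) // /lhs [in RHS]big_mkcond.
have count : (r * n`! = N0 * n * 'C(n.-1, r.-1))%N.
  by rewrite -(nperm_onto_mul_bin hrn) -/N0 mulnCA -mulnA mul_bin_diag prednK.
move: total_le; rewrite total_eq -mulrnA -[lhs *+ _]mulr_natr -[r%:R *+ _]mulr_natr.
rewrite -natrM count (natrM R (N0 * n)) [X in _ <= X]mulrC ler_pM2r // ltr0n muln_gt0 n_gt0 andbT.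
exact: nperm_onto_arc0_gt0.
Qed.
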